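(* In Algorithm MC (with $|b_j(v)|\le\deg(v)$ for all $v,j$ and $\alpha\in(0,1/4]$), for every $j\in[k]$ and every $i\ge0$ such that rounds $1,\dots,i$ have computed $r^1,\dots,r^i$, we have $\sum_{v\in V}|r^{\le i}_{v,j}|\cdot\deg(v)\le i\cdot\|b_j\|_1$.
   Context: Let $G=(V,E)$ be a unit-capacity undirected graph, $n=|V|\ge3$, every vertex of degree $\deg(v)\ge1$, each edge with a fixed arbitrary orientation; $B\in\mathbb R^{V\times E}$ is the incidence matrix (column $(u,v)$ has $+1$ in row $u$, $-1$ in row $v$, $0$ elsewhere). Algorithm MC takes $k\ge1$, $b=(b_1,\dots,b_k)\in\mathbb R^{V\times[k]}$ with $|b_j(v)|\le\deg(v)$ for all $v,j$, $\alpha\in(0,1/4]$ and an integer $T\ge1$. Set $w^1_{v,j,+}=w^1_{v,j,-}=1$. For $i=1,\dots,T$: (1) $\tilde w^i_{v,j,\circ}=w^i_{v,j,\circ}$ if $w^i_{v,j,\circ}\ge n$ and $0$ otherwise ($\circ\in\{+,-\}$); (2) $\tilde\phi^i_{v,j}=(\tilde w^i_{v,j,+}-\tilde w^i_{v,j,-})/\deg(v)$; (3) for each edge $(u,v)$ let $j^*$ maximize $|\tilde\phi^i_{u,j}-\tilde\phi^i_{v,j}|$ over $j\in[k]$ (ties arbitrary), set $f^i_{j^*}(u,v)=+1$ if $\tilde\phi^i_{u,j^*}>\tilde\phi^i_{v,j^*}$, $-1$ if $<$, $0$ otherwise, and $f^i_j(u,v)=0$ for $j\ne j^*$; (4) if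 $\sum_{j,v}\tilde\phi^i_{v,j}b_j(v)>\sum_{j,v}\tilde\phi^i_{v,j}(Bf^i_j)_v$, terminate; (5) $r^i_{v,j}=(b_j(v)-(Bf^i_j)_v)/\deg(v)$; (6) $w^{i+1}_{v,j,+}=w^i_{v,j,+}(1+\alpha r^i_{v,j})$, $w^{i+1}_{v,j,-}=w^i_{v,j,-}(1-\alpha r^i_{v,j})$. Write $r^{\le i}_{v,j}=\sum_{i'=1}^{i}r^{i'}_{v,j}$, with $r^{\le0}_{v,j}=0$. $\|b_j\|_1=\sum_v|b_j(v)|$. *)

(* Algorithm MC from the paper, specified relationally:
   an execution is any family (w, f, r) satisfying the update rules, which
   captures the arbitrary tie-breaking in step (3). *)
From HB Require Import structures.
From mathcomp Require Import all_boot all_order all_algebra.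
Set Implicit Arguments. Unset Strict Implicit. Unset Printing Implicit Defensive.
Import Order.TTheory GRing.Theory Num.Theory.
Local Open Scope ring_scope.

Section MC.
Variables (V E : finType) (src dst : E -> V).

(* G is a simple undirected graph: each edge e has fixed orientation
   (src e, dst e), no self-loops, no parallel edges. *)
Definition simple_graph : Prop :=
  (forall e, src e != dst e) /\
  (forall e1 e2, [set src e1; dst e1] = [set src e2; dst e2] -> e1 = e2).

Definition deg (v : V) : nat := #|[set e | (src e == v) || (dst e == v)]|.

Variable R : realFieldType.

Definition incid (v : V) (e : E) : R := (src e == v)%:R - (dst e == v)%:R.

Definition Bmul (g : E -> R) (v : V) : R := \sum_(e : E) incid v e * g e.

Variable k : nat.
(* weights w i v j s, with s = true for '+' and s = false for '-' *)
Variables (w : nat -> V -> 'I_k -> bool -> R)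
          (f : nat -> 'I_k -> E -> R)
          (r : nat -> V -> 'I_k -> R)
          (b : 'I_k -> V -> R) (alpha : R).

Definition wtil (i : nat) (v : V) (j : 'I_k) (s : bool) : R :=
  if (#|V|)%:R <= w i v j s then w i v j s else 0.

Definition phitil (i : nat) (v : V) (j : 'I_k) : R :=
  (wtil i v j true - wtil i v j false) / (deg v)%:R.

Definition flow_step (i : nat) : Prop :=
  forall e : E, exists jstar : 'I_k,
    (forall j : 'I_k,
       `|phitil i (src e) j - phitil i (dst e) j|
         <= `|phitil i (src e) jstar - phitil i (dst e) jstar|) /\
    f i jstar e = (if phitil i (src e) jstar > phitil i (dst e) jstar then 1
                   else if phitil i (src e) jstar < phitil i (dst e) jstar then -1
                   else 0) /\
    (forall j : 'I_k, j != jstar -> f i j e = 0).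

Definition no_stop (i : nat) : Prop :=
  ~ (\sum_(j : 'I_k) \sum_(v : V) phitil i v j * b j v >
     \sum_(j : 'I_k) \sum_(v : V) phitil i v j * Bmul (f i j) v).

Definition r_step (i : nat) : Prop :=
  forall v j, r i v j = (b j v - Bmul (f i j) v) / (deg v)%:R.

Definition w_step (i : nat) : Prop :=
  forall v j, w i.+1 v j true = w i v j true * (1 + alpha * r i v j) /\
              w i.+1 v j false = w i v j false * (1 - alpha * r i v j).

Definition w_init : Prop := forall v j s, w 1 v j s = 1.

Definition rounds_done (i : nat) : Prop :=
  w_init /\
  forall i', (1 <= i' <= i)%N ->
    flow_step i' /\ no_stop i' /\ r_step i' /\ w_step i'.

Definition rle (i : nat) (v : V) (j : 'I_k) : R :=
  \sum_(1 <= i' < i.+1) r i' v j.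

End MC.

(* Put x_v = deg(v) r^{<=m}_{v,j}.  Then deg(v) r^{<=m+1}_{v,j} = x_v - (B f_j)_v + b_j(v), so it
   suffices that routing the flow f = f^{m+1}_j does not increase sum_v |x_v|.  If
   phi^{m+1}_{v,j} > 0 then w^{m+1}_{v,j,+} = prod_t (1 + alpha r^t_{v,j}) >= n >= 3 with
   |alpha r^t_{v,j}| <= 1/2, and AM-GM, in the form prod (1 + y_t) (1 - sum y_t) <= 1, forces
   r^{<=m}_{v,j} >= 1, i.e. x_v >= deg(v) >= |(B f)_v|; symmetrically when phi < 0.  Hence at a
   vertex with phi <> 0 the flow moves x_v towards 0 without crossing it, one unit per incident
   flow edge, while at a vertex with phi = 0 each edge costs at most one unit.  Flow only runs
   from larger to smaller phi, so on every flow edge the gain at one endpoint pays for the cost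
   at the other. *)

From mathcomp Require Import all_boot all_order all_algebra.
From mathcomp Require Import ring lra.
Set Implicit Arguments. Unset Strict Implicit. Unset Printing Implicit Defensive.
Import Order.TTheory GRing.Theory Num.Theory.
Local Open Scope ring_scope.

Section ProductBounds.
Variable R : realFieldType.

Lemma expr1D_mul1Bn_le1 (N : nat) (a : R) :
  -1 <= a -> (1 + a) ^+ N * (1 - N%:R * a) <= 1.
Proof.
move=> a_ge; elim: N => [|N IH]; first by rewrite expr0 mul0r subr0 mulr1.
have a1_ge0 : 0 <= 1 + a by lra.
have N_ge0 : 0 <= N%:R :> R by rewrite ler0n.
apply: le_trans _ IH; rewrite exprSr -mulrA ler_wpM2l ?exprn_ge0 //.
rewrite -natr1; nra.
Qed.

Lemma prod1D_mul1Bsum_le1 (I : finType) (y : I -> R) :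
  (forall i, 0 <= 1 + y i) -> \prod_i (1 + y i) * (1 - \sum_i y i) <= 1.
Proof.
move=> y_ge; have prod_ge0 : 0 <= \prod_i (1 + y i) by exact: prodr_ge0.
have [s_gt1|s_le1] := ltP 1 (\sum_i y i).
  by apply: le_trans _ ler01; rewrite mulr_ge0_le0 // subr_le0 ltW.
have [N0|N_gt0] := posnP #|I|.
  by rewrite !big_pred0 ?mul1r ?subr0 // => i; move: (card0_eq N0 i); rewrite !inE.
have N_gt0' : 0 < #|I|%:R :> R by rewrite ltr0n.
pose a := (\sum_i y i) / #|I|%:R.
have AGM : \prod_i (1 + y i) <= (1 + a) ^+ #|I|.
  have [+ _] := leif_AGM (fun i (_ : i \in predT) => y_ge i).
  rewrite big_split /= sumr_const -/#|I| (eq_bigl xpredT) //.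
  by rewrite [X in _ + X](eq_bigl xpredT) // mulrDl divff ?lt0r_neq0.
have a_ge : -1 <= a.
  have : 0 <= \sum_i (1 + y i) by exact: sumr_ge0.
  by rewrite big_split /= sumr_const -/#|I| /a ler_pdivlMr // mulN1r => ?; lra.
have Na : #|I|%:R * a = \sum_i y i by rewrite /a mulrC divfK ?lt0r_neq0.
apply: le_trans _ (expr1D_mul1Bn_le1 #|I| a_ge).
by rewrite Na ler_wpM2r // subr_ge0.
Qed.

Lemma sum_ge1_of_prod_ge3 (I : finType) (alpha : R) (y : I -> R) :
  0 < alpha -> alpha <= 1 / 4 -> (forall i, `|y i| <= 2) ->
  3 <= \prod_i (1 + alpha * y i) -> 1 <= \sum_i y i.
Proof.
move=> a_gt0 a_le y_le P_ge.
have factor_ge0 i : 0 <= 1 + alpha * y i.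
  have := y_le i; rewrite ler_norml => /andP[y_ge _].
  have : alpha * (-2) <= alpha * y i by rewrite ler_wpM2l // ltW.
  lra.
have := prod1D_mul1Bsum_le1 factor_ge0.
rewrite -mulr_sumr; set P := \prod_i _; set s := \sum_i _ => P_bound.
rewrite leNgt; apply/negP => s_lt1.
have as_lt : alpha * s < 1 / 4 by nra.
have : 3 * (1 - alpha * s) <= P * (1 - alpha * s) by rewrite ler_wpM2r //; lra.
lra.
Qed.

End ProductBounds.

Section SignLoss.
Variable R : realDomainType.

(* The increase of [|x|] when [x] moves by [-t], given that [x] has the sign of [p] and dominates [t]
   (norm_subr_le_sign_loss). *)
Definition sign_loss (p t : R) : R :=
  if 0 < p then - t else if p < 0 then t else `|t|.

Lemma sign_loss0 (p : R) : sign_loss p 0 = 0.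
Proof. by rewrite /sign_loss oppr0 normr0 !if_same. Qed.

Lemma sign_loss_sum (I : Type) (s : seq I) (p : R) (t : I -> R) :
  sign_loss p (\sum_(i <- s) t i) <= \sum_(i <- s) sign_loss p (t i).
Proof.
rewrite /sign_loss; case: ifP => _; first by rewrite sumrN.
by case: ifP => _; [exact: lexx | exact: ler_norm_sum].
Qed.

Lemma norm_subr_le_sign_loss (p x t d : R) :
  `|t| <= d -> (0 < p -> d <= x) -> (p < 0 -> x <= - d) ->
  `|x - t| <= `|x| + sign_loss p t.
Proof.
rewrite /sign_loss => t_le x_pos x_neg; have := t_le; rewrite ler_norml => /andP[? ?].
have [p_gt0|p_lt0|_] := ltrgt0P p.
- have := x_pos p_gt0 => ?; rewrite !ger0_norm; lra.
- have := x_neg p_lt0 => ?; rewrite !ler0_norm; lra.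
- exact: ler_normB.
Qed.

Lemma norm_0_or_sg_le1 (z p : R) : z = 0 \/ z = Num.sg p -> `|z| <= 1.
Proof. by case=> ->; rewrite ?normr0 ?normr_sg // lern1 leq_b1. Qed.

Lemma sign_loss_edge (p q : R) : q < p -> sign_loss p 1 + sign_loss q (-1) <= 0.
Proof.
rewrite /sign_loss normrN normr1 => qp.
by have [p_gt0|p_lt0|p0] := ltrgt0P p; repeat case: ifP => ?; lra.
Qed.

End SignLoss.

Section GraphDescent.
Variables (V E : finType) (src dst : E -> V) (R : realFieldType).
Hypothesis no_loop : forall e, src e != dst e.

Local Notation D v := ((deg src dst v)%:R : R).

Lemma norm_incid_le v e : `|incid src dst R v e| <= ((src e == v) || (dst e == v))%:R.
Proof.
by rewrite /incid; case: eqP; case: eqP => //= _ _;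
  rewrite ?subrr ?normr0 ?subr0 ?sub0r ?normrN ?normr1.
Qed.

Lemma norm_Bmul_le (g : E -> R) v :
  (forall e, `|g e| <= 1) -> `|Bmul src dst g v| <= D v.
Proof.
move=> g_le; apply: le_trans (ler_norm_sum _ _ _) _.
apply: le_trans (_ : \sum_e ((src e == v) || (dst e == v))%:R <= _).
  by apply: ler_sum => e _; rewrite normrM -[X in _ <= X]mulr1 ler_pM ?norm_incid_le.
rewrite (eq_bigr (fun e => if (src e == v) || (dst e == v) then 1 else 0)).
  by rewrite -big_mkcond sumr_const /deg cardsE.
by move=> e _; case: ifP.
Qed.

Lemma incid_src e : incid src dst R (src e) e = 1.
Proof. by rewrite /incid eqxx eq_sym (negbTE (no_loop e)) subr0. Qed.

Lemma incid_dst e : incid src dst R (dst e) e = -1.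
Proof. by rewrite /incid eqxx (negbTE (no_loop e)) sub0r. Qed.

Lemma incid_other e v : v != src e -> v != dst e -> incid src dst R v e = 0.
Proof. by rewrite /incid !(eq_sym _ v) => /negbTE-> /negbTE->; rewrite subrr. Qed.

Lemma sum_sign_loss_edge (phi : V -> R) (g : E -> R) e :
  g e = 0 \/ g e = Num.sg (phi (src e) - phi (dst e)) ->
  \sum_v sign_loss (phi v) (incid src dst R v e * g e) <= 0.
Proof.
move=> ge; rewrite (bigD1 (src e)) //= (bigD1 (dst e)) 1?eq_sym //=.
rewrite big1 => [|v /andP[vs vd]]; last by rewrite incid_other // mul0r sign_loss0.
rewrite addr0 incid_src incid_dst mul1r mulN1r.
case: ge => ->; first by rewrite oppr0 !sign_loss0 addr0.
have [lt|gt|eq] := ltrgtP (phi (src e)) (phi (dst e)).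
- by rewrite ltr0_sg ?subr_lt0 // opprK addrC sign_loss_edge.
- by rewrite gtr0_sg ?subr_gt0 // sign_loss_edge.
- by rewrite eq subrr sgr0 oppr0 !sign_loss0 addr0.
Qed.

Lemma sum_norm_subr_Bmul_le (g : E -> R) (phi x : V -> R) :
  (forall e, g e = 0 \/ g e = Num.sg (phi (src e) - phi (dst e))) ->
  (forall v, 0 < phi v -> D v <= x v) ->
  (forall v, phi v < 0 -> x v <= - D v) ->
  \sum_v `|x v - Bmul src dst g v| <= \sum_v `|x v|.
Proof.
move=> g_sg x_pos x_neg.
have g_le e : `|g e| <= 1 := norm_0_or_sg_le1 (g_sg e).
have vertex_bound v : `|x v - Bmul src dst g v| <=
    `|x v| + \sum_e sign_loss (phi v) (incid src dst R v e * g e).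
  apply: le_trans (norm_subr_le_sign_loss (norm_Bmul_le v g_le) (x_pos v) (x_neg v)) _.
  by rewrite lerD2l sign_loss_sum.
apply: le_trans (ler_sum _ (fun v _ => vertex_bound v)) _.
rewrite big_split /= exchange_big /= gerDl.
by apply: sumr_le0 => e _; exact: sum_sign_loss_edge.
Qed.

End GraphDescent.

Section AlgorithmMC.
Variables (V E : finType) (src dst : E -> V) (R : realFieldType) (k : nat)
  (b : 'I_k -> V -> R) (alpha : R) (w : nat -> V -> 'I_k -> bool -> R)
  (f : nat -> 'I_k -> E -> R) (r : nat -> V -> 'I_k -> R).

Local Notation D v := ((deg src dst v)%:R : R).
Local Notation phi := (phitil src dst w).
Local Notation rounds_done := (rounds_done src dst w f r b alpha).

Hypotheses (no_loop : forall e, src e != dst e)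
  (deg_ge1 : forall v, (1 <= deg src dst v)%N)
  (b_le : forall v j, `|b j v| <= D v)
  (alpha_gt0 : 0 < alpha) (alpha_le : alpha <= 1 / 4) (V_ge3 : (3 <= #|V|)%N).

Let D_gt0 v : 0 < D v. Proof. by rewrite ltr0n deg_ge1. Qed.

Lemma rounds_done_le i m : (m <= i)%N -> rounds_done i -> rounds_done m.
Proof.
move=> mi [w1 done_i]; split=> // t /andP[t_ge t_le].
by apply: done_i; rewrite t_ge (leq_trans t_le).
Qed.

Lemma flow_step_sg i : flow_step src dst w f i -> forall j e,
  f i j e = 0 \/ f i j e = Num.sg (phi i (src e) j - phi i (dst e) j).
Proof.
move=> flow j e; have [j' [_ [fj' f_other]]] := flow e.
have [->|ne] := eqVneq j j'; last by left; exact: f_other.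
right; rewrite fj'.
have [lt|gt|->] := ltrgtP (phi i (src e) j') (phi i (dst e) j').
- by rewrite ltr0_sg ?subr_lt0.
- by rewrite gtr0_sg ?subr_gt0.
- by rewrite subrr sgr0.
Qed.

Lemma w_prod m : rounds_done m -> forall v j,
  w m.+1 v j true = \prod_(1 <= t < m.+1) (1 + alpha * r t v j) /\
  w m.+1 v j false = \prod_(1 <= t < m.+1) (1 + alpha * - r t v j).
Proof.
elim: m => [[w1 _] v j|m IH done_m v j]; first by rewrite !big_geq // !w1.
have [w_true w_false] := IH (rounds_done_le (leqnSn m) done_m) v j.
have [_ [_ [_ /(_ v j)[-> ->]]]] := done_m.2 m.+1 (leqnn _).
by rewrite w_true w_false !(big_nat_recr m.+1) //= mulrN.
Qed.

Lemma norm_r_le2 t v j : flow_step src dst w f t -> r_step src dst f r b t ->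
  `|r t v j| <= 2.
Proof.
move=> flow r_t; have f_le e : `|f t j e| <= 1 := norm_0_or_sg_le1 (flow_step_sg flow j e).
rewrite r_t normrM normfV (gtr0_norm (D_gt0 v)) ler_pdivrMr //.
apply: le_trans (ler_normB _ _) _.
by have := norm_Bmul_le src dst v f_le; have := b_le v j; lra.
Qed.

Lemma w_ge_of_wtil_gt0 i v j s : 0 < wtil w i v j s -> #|V|%:R <= w i v j s.
Proof. by rewrite /wtil; case: ifP => //; rewrite ltxx. Qed.

Lemma wtil_ge0 i v j s : 0 <= wtil w i v j s.
Proof. by rewrite /wtil; case: ifP => // /(le_trans _)-> //. Qed.

Lemma w_true_ge_of_phitil_gt0 i v j : 0 < phi i v j -> #|V|%:R <= w i v j true.
Proof.
rewrite /phitil pmulr_lgt0 ?invr_gt0 // subr_gt0 => lt.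
by apply: w_ge_of_wtil_gt0; apply: le_lt_trans lt; exact: wtil_ge0.
Qed.

Lemma w_false_ge_of_phitil_lt0 i v j : phi i v j < 0 -> #|V|%:R <= w i v j false.
Proof.
rewrite /phitil pmulr_llt0 ?invr_gt0 // subr_lt0 => lt.
by apply: w_ge_of_wtil_gt0; apply: le_lt_trans lt; exact: wtil_ge0.
Qed.

Lemma rle_sign m v j : rounds_done m ->
  (0 < phi m.+1 v j -> 1 <= rle r m v j) /\ (phi m.+1 v j < 0 -> rle r m v j <= -1).
Proof.
move=> done_m; have [w_true w_false] := w_prod done_m v j.
have n_ge3 : 3 <= #|V|%:R :> R by rewrite (ler_nat R 3).
have sum_ge1 (y : nat -> R) : (forall t, (1 <= t <= m)%N -> `|y t| <= 2) ->
    #|V|%:R <= \prod_(1 <= t < m.+1) (1 + alpha * y t) ->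
    1 <= \sum_(1 <= t < m.+1) y t.
  move=> y_le; rewrite !big_add1 /= !big_mkord => P_ge.
  apply: sum_ge1_of_prod_ge3 alpha_gt0 alpha_le _ (le_trans n_ge3 P_ge) => i.
  exact: y_le i.+1 (ltn_ord i).
have r_le t : (1 <= t <= m)%N -> `|r t v j| <= 2.
  by move=> t_m; have [? [_ [? _]]] := done_m.2 t t_m; exact: norm_r_le2.
split=> [/w_true_ge_of_phitil_gt0|/w_false_ge_of_phitil_lt0].
- by rewrite w_true => /sum_ge1; apply.
- rewrite w_false => /sum_ge1; rewrite sumrN lerNr; apply=> t /r_le.
  by rewrite normrN.
Qed.

Lemma sum_norm_rle_le i j : rounds_done i ->
  \sum_v `|rle r i v j| * D v <= i%:R * \sum_v `|b j v|.
Proof.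
elim: i => [_|m IH done_m1].
  by rewrite mul0r big1 // => v _; rewrite /rle big_geq // normr0 mul0r.
have done_m := rounds_done_le (leqnSn m) done_m1.
have [flow [_ [r_m1 _]]] := done_m1.2 m.+1 (leqnn _).
pose x v := D v * rle r m v j.
have descent : \sum_v `|x v - Bmul src dst (f m.+1 j) v| <= \sum_v `|rle r m v j| * D v.
  have -> : \sum_v `|rle r m v j| * D v = \sum_v `|x v|.
    by apply: eq_bigr => v _; rewrite normrM (gtr0_norm (D_gt0 v)) mulrC.
  apply: (sum_norm_subr_Bmul_le no_loop (flow_step_sg flow j)) => v.
    by move=> /(rle_sign v j done_m).1 ?; rewrite /x -{1}[D v]mulr1 ler_wpM2l // ltW.
  by move=> /(rle_sign v j done_m).2 ?; rewrite /x -mulrN1 ler_wpM2l // ltW.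
have rle_next v : rle r m.+1 v j * D v = x v - Bmul src dst (f m.+1 j) v + b j v.
  rewrite /rle big_nat_recr //= -/(rle r m v j) r_m1 /x.
  by field; rewrite lt0r_neq0.
apply: le_trans (_ : \sum_v (`|x v - Bmul src dst (f m.+1 j) v| + `|b j v|) <= _).
  apply: ler_sum => v _; rewrite -[X in _ * X](gtr0_norm (D_gt0 v)) -normrM rle_next.
  exact: ler_normD.
by rewrite big_split /= -natr1 mulrDl mul1r lerD2r (le_trans descent (IH done_m)).
Qed.

End AlgorithmMC.

Theorem lemma2p14 (V E : finType) (src dst : E -> V) (R : realFieldType)
  (k : nat) (b : 'I_k -> V -> R) (alpha : R) (T : nat)
  (w : nat -> V -> 'I_k -> bool -> R) (f : nat -> 'I_k -> E -> R)
  (r : nat -> V -> 'I_k -> R) :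
  simple_graph src dst ->
  (3 <= #|V|)%N ->
  (forall v, (1 <= deg src dst v)%N) ->
  (1 <= k)%N ->
  (forall v j, `|b j v| <= (deg src dst v)%:R) ->
  0 < alpha -> alpha <= 1 / 4 ->
  (1 <= T)%N ->
  forall (j : 'I_k) (i : nat), (i <= T)%N ->
  rounds_done src dst w f r b alpha i ->
  \sum_(v : V) `|rle r i v j| * (deg src dst v)%:R
    <= i%:R * \sum_(v : V) `|b j v|.
Proof.
move=> [no_loop _] V_ge3 deg_ge1 _ b_le alpha_gt0 alpha_le _ j i _.
exact: sum_norm_rle_le.
Qed.
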